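(* There exist a set $\Omega$ with exactly three elements, a distribution $m\in\Delta(\Omega)$ and $\lambda\in[0,1)$ defining an irreducible Markov chain with transitions $\pi(\omega\mid\omega)=(1-\lambda)m(\omega)+\lambda$ and $\pi(\omega'\mid\omega)=(1-\lambda)m(\omega')$ for $\omega'\neq\omega$, a payoff function $r:\Omega\to\mathbb{R}$, a discount factor $\delta\in(0,1)$ and an initial belief $p_1\in\Delta(\Omega)$ such that the greedy strategy $\sigma_*$ is not optimal at $p_1$ in the decision problem described in the context.
   Context: Identify each $\omega\in\Omega$ with a unit vector of $\mathbb{R}^\Omega$ and $\Delta(\Omega)$ with the unit simplex. For $p\in\Delta(\Omega)$ let $\langle p,r\rangle=\sum_\omega p(\omega)r(\omega)$; $I=\{p:\langle p,r\rangle\ge0\}$, $J=\Delta(\Omega)\setminus I$. Let $M$ be the transition matrix and $\phi(q)=qM$ (for the chain above, $\phi(p)=m+\lambda(p-m)$). $\mathcal{S}(p)$ is the set of Borel probability measures on $\Delta(\Omega)$ with mean $p$, $\mu_p$ the Dirac mass at $p$. Decision problem from $p_1$: at each stage $n$, at belief $p_n$, the advisor chooses $\mu\in\mathcal{S}(p_n)$ (possibly depending on the past), a posterior $q_n\sim\mu$ is drawn, the stage payoff is $\mathbf{1}_{\{q_n\in I\}}$, and $p_{n+1}=\phi(q_n)$. A strategy's payoff is $\mathbb{E}[(1-\delta)\sum_{n\ge1}\delta^{n-1}\mathbf{1}_{\{q_n\in I\}}]$; $V_\delta(p_1)$ is the maximal payoff; a strategy is optimal at $p_1$ if it achieves it.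 The greedy strategy $\sigma_*$: at $p\in I$ choose $\mu_p$; at $p\in J$ choose a two-point splitting $p=a_Iq_I+a_Jq_J$ maximizing $a_I$ subject to $q_I\in I$, $q_J\in\Delta(\Omega)$, $a_I+a_J=1$, $a_I,a_J\ge0$. *)

From HB Require Import structures.
From mathcomp Require Import all_boot all_order all_algebra.
From mathcomp Require Import classical_sets reals.
From Stdlib Require List.
Set Implicit Arguments. Unset Strict Implicit. Unset Printing Implicit Defensive.
Import Order.TTheory GRing.Theory Num.Theory.
Local Open Scope ring_scope.
Local Open Scope classical_set_scope.

Section Defs.
Variables (R : realType) (Omega : finType).

Definition is_dist (p : Omega -> R) : Prop :=
  (forall w, 0 <= p w) /\ \sum_(w : Omega) p w = 1.

Definition inner (p r : Omega -> R) : R := \sum_(w : Omega) p w * r w.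

Definition inI (r p : Omega -> R) : Prop := is_dist p /\ 0 <= inner p r.
Definition inJ (r p : Omega -> R) : Prop := is_dist p /\ inner p r < 0.

Definition trans (m : Omega -> R) (lam : R) (w w' : Omega) : R :=
  (1 - lam) * m w' + (if w == w' then lam else 0).

Definition phi (m : Omega -> R) (lam : R) (q : Omega -> R) : Omega -> R :=
  fun w' => \sum_(w : Omega) q w * trans m lam w w'.

Fixpoint mpow (m : Omega -> R) (lam : R) (n : nat) (w w' : Omega) : R :=
  match n with
  | O => if w == w' then 1 else 0
  | S n => \sum_(v : Omega) mpow m lam n w v * trans m lam v w'
  end.

Definition irreducible (m : Omega -> R) (lam : R) : Prop :=
  forall w w', exists n, 0 < mpow m lam n w w'.

(* A finitely supported probability measure on Delta(Omega):
   a list of (weight, posterior) pairs. *)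
Definition splitting := seq (R * (Omega -> R)).

Definition is_splitting (p : Omega -> R) (s : splitting) : Prop :=
  (forall x, List.In x s -> 0 <= x.1 /\ is_dist x.2) /\
  \sum_(x <- s) x.1 = 1 /\
  (forall w, \sum_(x <- s) x.1 * x.2 w = p w).

(* A strategy maps the history of past posteriors (q_1, ..., q_{n-1}) to the
   splitting chosen at stage n. *)
Definition strategy := seq (Omega -> R) -> splitting.

Definition belief (m : Omega -> R) (lam : R) (p1 : Omega -> R)
  (h : seq (Omega -> R)) : Omega -> R :=
  match h with
  | [::] => p1
  | q :: h' => phi m lam (last q h')
  end.

(* h can occur with positive probability under sigma *)
Definition reachable (sigma : strategy) (h : seq (Omega -> R)) : Prop :=
  forall k, (k < size h)%N ->
    exists a, 0 < a /\ List.In (a, nth (fun _ => 0) h k) (sigma (take k h)).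

Definition admissible (m : Omega -> R) (lam : R) (p1 : Omega -> R)
  (sigma : strategy) : Prop :=
  forall h, reachable sigma h -> is_splitting (belief m lam p1 h) (sigma h).

(* stage payoff 1_{q in I} (posteriors are distributions) *)
Definition ind (r q : Omega -> R) : R := if 0 <= inner q r then 1 else 0.

Fixpoint trunc_payoff (r : Omega -> R) (delta : R) (sigma : strategy)
  (N : nat) (h : seq (Omega -> R)) : R :=
  match N with
  | O => 0
  | S N => \sum_(x <- sigma h)
             x.1 * ((1 - delta) * ind r x.2
                    + delta * trunc_payoff r delta sigma N (rcons h x.2))
  end.

(* E[(1-delta) sum_{n>=1} delta^(n-1) 1_{q_n in I}] (monotone limit) *)
Definition payoff (r : Omega -> R) (delta : R) (sigma : strategy) : R :=
  sup (range (fun N => trunc_payoff r delta sigma N [::])).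

Definition feasible (r p : Omega -> R) (aI : R) (qI qJ : Omega -> R) : Prop :=
  0 <= aI /\ 0 <= 1 - aI /\ inI r qI /\ is_dist qJ /\
  (forall w, p w = aI * qI w + (1 - aI) * qJ w).

Definition greedy_split (r p : Omega -> R) (t : R * (Omega -> R) * (Omega -> R))
  : Prop :=
  feasible r p t.1.1 t.1.2 t.2 /\
  (forall b qI qJ, feasible r p b qI qJ -> b <= t.1.1).

Definition greedy_sel (r : Omega -> R)
  (g : (Omega -> R) -> R * (Omega -> R) * (Omega -> R)) : Prop :=
  forall p, inJ r p -> greedy_split r p (g p).

Definition greedy_strategy (m : Omega -> R) (lam : R) (p1 r : Omega -> R)
  (g : (Omega -> R) -> R * (Omega -> R) * (Omega -> R)) : strategy :=
  fun h => let p := belief m lam p1 h in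
    if 0 <= inner p r then [:: (1, p)]
    else [:: ((g p).1.1, (g p).1.2); (1 - (g p).1.1, (g p).2)].

End Defs.

From HB Require Import structures.
From mathcomp Require Import all_boot all_order all_algebra.
From mathcomp Require Import classical_sets reals.
From mathcomp Require Import lra.
From Stdlib Require List.
Import Order.TTheory GRing.Theory Num.Theory.
Set Implicit Arguments. Unset Strict Implicit. Unset Printing Implicit Defensive.
Local Open Scope ring_scope.

(* Since 1_I(q) <= 101 q(0) on the simplex, the
   affine function (101/2250) (1 + 1250 q(0)) is excessive, hence bounds the continuation
   payoff of every strategy.  At p1 the greedy advisor puts the maximal weight 2/25 on I
   and the rest on a posterior with no mass on state 0, from which the continuation payoff
   is at most 101/1125: the greedy payoff stays below 0.13.  Waiting one stage instead, the
   belief drifts to phi(p1), which can be split with weight 4/5 on a point of I, for a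
   payoff of at least 1/5. *)

Section Beliefs.
Variables (R : realType) (Omega : finType) (m : Omega -> R) (lam : R).

Lemma phiE (q : Omega -> R) w :
  \sum_v q v = 1 -> phi m lam q w = (1 - lam) * m w + lam * q w.
Proof.
move=> q_sum; rewrite /phi /trans.
under eq_bigr do rewrite mulrDr.
rewrite big_split /= -big_distrl /= q_sum mul1r (bigD1 w) //= eqxx big1 ?addr0.
  by rewrite [q w * _]mulrC.
by move=> v /negbTE ->; rewrite mulr0.
Qed.

Lemma irreducible_of_gt0 :
  (forall w, 0 < m w) -> 0 <= lam < 1 -> irreducible m lam.
Proof.
move=> m_gt0 /andP[lam_ge0 lam_lt1] w w'; exists 1%N.
rewrite /= (bigD1 w) //= eqxx mul1r big1 ?addr0; last first.
  by move=> v /negbTE; rewrite eq_sym => ->; rewrite mul0r.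
apply: ltr_wpDr; first by case: eqP.
by apply: mulr_gt0; rewrite ?subr_gt0.
Qed.

Hypotheses (m_dist : is_dist m) (lam_ge0 : 0 <= lam) (lam_le1 : lam <= 1).

Lemma phi_dist q : is_dist q -> is_dist (phi m lam q).
Proof.
have [m_ge0 m_sum] := m_dist; move=> [q_ge0 q_sum]; split=> [w|].
  by rewrite phiE // addr_ge0 ?mulr_ge0 ?subr_ge0.
under eq_bigr do rewrite phiE //; rewrite big_split /=.
by rewrite -!mulr_sumr m_sum q_sum !mulr1 subrK.
Qed.

Variables (p1 : Omega -> R) (sigma : strategy R Omega).

Lemma belief_rcons h q : belief m lam p1 (rcons h q) = phi m lam q.
Proof. by case: h => [|q' h] //=; rewrite last_rcons. Qed.

Lemma reachable_rcons h q :
  reachable sigma (rcons h q) <->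
  reachable sigma h /\ exists a, 0 < a /\ List.In (a, q) (sigma h).
Proof.
have take_rcons k : (k <= size h)%N -> take k (rcons h q) = take k h.
  by move=> le_kh; rewrite -cats1 takel_cat.
have size_rcons_h : (size h < size (rcons h q))%N by rewrite size_rcons.
split=> [reach|[reach_h last_q] k].
  split; last first.
    have := reach _ size_rcons_h.
    by rewrite nth_rcons ltnn eqxx take_rcons // take_size => last_q.
  move=> k lt_kh; have := reach k (ltn_trans lt_kh size_rcons_h).
  by rewrite nth_rcons lt_kh take_rcons 1?ltnW // => nth_k.
rewrite size_rcons ltnS leq_eqVlt => /orP[/eqP ->|lt_kh].
  by rewrite nth_rcons ltnn eqxx take_rcons // take_size.
by rewrite nth_rcons lt_kh take_rcons 1?ltnW //; apply: reach_h.
Qed.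

Lemma reachable_singleton a q :
  0 < a -> List.In (a, q) (sigma [::]) -> reachable sigma [:: q].
Proof. by move=> a_gt0 aq_in; apply/(reachable_rcons [::] q); split=> //; exists a. Qed.

Hypothesis p1_dist : is_dist p1.
Hypothesis splits_dist_belief : forall h, reachable sigma h ->
  is_dist (belief m lam p1 h) -> is_splitting (belief m lam p1 h) (sigma h).

Lemma reachable_belief_dist h :
  reachable sigma h -> is_dist (belief m lam p1 h).
Proof.
elim/last_ind: h => [//|h q IH] /reachable_rcons[reach_h [a [_ aq_in]]].
rewrite belief_rcons; apply: phi_dist.
have [weights _] := splits_dist_belief reach_h (IH reach_h).
exact: (weights _ aq_in).2.
Qed.

Lemma admissible_of_splits : admissible m lam p1 sigma.
Proof.
by move=> h reach_h; apply: splits_dist_belief reach_h (reachable_belief_dist reach_h).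
Qed.
End Beliefs.

Lemma ler_sum_In (R : realType) (T : Type) (s : seq T) (F G : T -> R) :
  (forall x, List.In x s -> F x <= G x) ->
  \sum_(x <- s) F x <= \sum_(x <- s) G x.
Proof.
elim: s => [|x s IH] le_FG; first by rewrite !big_nil.
rewrite !big_cons lerD ?le_FG //=; first by left.
by apply: IH => y y_in; apply: le_FG; right.
Qed.

Lemma inner_splitting (R : realType) (Omega : finType) (p v : Omega -> R) s :
  is_splitting p s -> \sum_(x <- s) x.1 * inner x.2 v = inner p v.
Proof.
move=> [_ [_ mean]]; rewrite /inner.
under eq_bigr do rewrite big_distrr.
rewrite exchange_big; apply: eq_bigr => w _.
rewrite -mean big_distrl; apply: eq_bigr => x _; exact: mulrA.
Qed.

Lemma inner1_dist (R : realType) (Omega : finType) (p : Omega -> R) :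
  is_dist p -> inner p (fun _ => 1) = 1.
Proof. by move=> [_ p_sum]; rewrite /inner; under eq_bigr do rewrite mulr1. Qed.

Section Payoff.
Variables (R : realType) (Omega : finType) (m : Omega -> R) (lam : R).
Variables (r : Omega -> R) (delta : R).
Hypotheses (m_dist : is_dist m) (lam_ge0 : 0 <= lam) (lam_le1 : lam <= 1).
Hypothesis delta_ge0 : 0 <= delta.

Definition excessive (v : Omega -> R) : Prop := forall q, is_dist q ->
  (1 - delta) * ind r q + delta * inner (phi m lam q) v <= inner q v.

Lemma admissible_belief_dist p1 sigma h :
  is_dist p1 -> admissible m lam p1 sigma -> reachable sigma h ->
  is_dist (belief m lam p1 h).
Proof.
move=> p1_dist adm.
apply: (reachable_belief_dist m_dist lam_ge0 lam_le1 p1_dist) => h' reach_h' _.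
exact: adm.
Qed.

Lemma trunc_payoff_le_excessive p1 sigma v N h :
  is_dist p1 -> admissible m lam p1 sigma ->
  (forall w, 0 <= v w) -> excessive v -> reachable sigma h ->
  trunc_payoff r delta sigma N h <= inner (belief m lam p1 h) v.
Proof.
move=> p1_dist adm v_ge0 v_exc; elim: N h => [|N IH] h reach_h /=.
  have [p_ge0 _] := admissible_belief_dist p1_dist adm reach_h.
  by apply: sumr_ge0 => w _; apply: mulr_ge0.
have split_h := adm h reach_h.
rewrite -(inner_splitting v split_h); apply: ler_sum_In => -[a q] aq_in /=.
have [a_ge0 q_dist] := split_h.1 _ aq_in.
have [->|a_neq0] := eqVneq a 0; first by rewrite !mul0r.
have reach_hq : reachable sigma (rcons h q).
  by apply/reachable_rcons; split=> //; exists a; rewrite lt0r a_neq0 a_ge0.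
apply: ler_wpM2l => //; apply: le_trans (v_exc q q_dist).
by rewrite lerD2l ler_wpM2l // -(belief_rcons m lam p1 h) IH.
Qed.

Lemma excessive_one : delta <= 1 -> excessive (fun _ => 1).
Proof.
move=> delta_le1 q q_dist.
rewrite !inner1_dist //; last exact: phi_dist.
by rewrite /ind; case: ifP => _; lra.
Qed.

Lemma trunc_payoff_le1 p1 sigma N h : delta <= 1 ->
  is_dist p1 -> admissible m lam p1 sigma -> reachable sigma h ->
  trunc_payoff r delta sigma N h <= 1.
Proof.
move=> delta_le1 p1_dist adm reach_h.
rewrite -(inner1_dist (admissible_belief_dist p1_dist adm reach_h)).
exact: trunc_payoff_le_excessive (fun _ => ler01) (excessive_one delta_le1) reach_h.
Qed.

Lemma payoff_le sigma c :
  (forall N, trunc_payoff r delta sigma N [::] <= c) -> payoff r delta sigma <= c.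
Proof.
move=> le_c; apply: ge_sup; first by exists (trunc_payoff r delta sigma 0 [::]), 0%N.
by move=> _ [N _ <-].
Qed.

Lemma trunc_payoff_le_payoff sigma c N :
  (forall N, trunc_payoff r delta sigma N [::] <= c) ->
  trunc_payoff r delta sigma N [::] <= payoff r delta sigma.
Proof. by move=> le_c; apply: ub_le_sup; [exists c => _ [M _ <-] | exists N]. Qed.
End Payoff.

Section Greedy.
Variables (R : realType) (Omega : finType) (r : Omega -> R).

Lemma dirac_splitting (p : Omega -> R) : is_dist p -> is_splitting p [:: (1, p)].
Proof.
move=> p_dist; split; first by move=> _ [<-|[]].
by split=> [|w]; rewrite big_cons big_nil ?mul1r addr0.
Qed.

Lemma feasible_splitting (p : Omega -> R) a qI qJ :
  feasible r p a qI qJ -> is_splitting p [:: (a, qI); (1 - a, qJ)].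
Proof.
move=> [a_ge0 [a_le1 [[qI_dist _] [qJ_dist p_eq]]]]; split.
  by move=> _ [<-|[<-|[]]].
by split=> [|w]; rewrite !big_cons big_nil addr0 ?subrKC // p_eq.
Qed.

Lemma feasible_weight_le (p v : Omega -> R) b qI qJ :
  (forall q, is_dist q -> 0 <= inner q v) -> (forall q, inI r q -> 1 <= inner q v) ->
  feasible r p b qI qJ -> b <= inner p v.
Proof.
move=> v_ge0 v_ge1 [b_ge0 [b_le1 [qI_I [qJ_dist p_eq]]]].
have -> : inner p v = b * inner qI v + (1 - b) * inner qJ v.
  rewrite /inner !mulr_sumr -big_split; apply: eq_bigr => w _.
  by rewrite p_eq mulrDl !mulrA.
have := ler_wpM2l b_ge0 (v_ge1 _ qI_I); have := mulr_ge0 b_le1 (v_ge0 _ qJ_dist).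
by rewrite mulr1; lra.
Qed.

Variables (m : Omega -> R) (lam : R) (p1 : Omega -> R).
Variable g : (Omega -> R) -> R * (Omega -> R) * (Omega -> R).
Hypotheses (m_dist : is_dist m) (lam_ge0 : 0 <= lam) (lam_le1 : lam <= 1).
Hypotheses (p1_dist : is_dist p1) (g_greedy : greedy_sel r g).

Lemma greedy_admissible : admissible m lam p1 (greedy_strategy m lam p1 r g).
Proof.
apply: admissible_of_splits => // h _ p_dist; rewrite /greedy_strategy.
case: ifPn => [_|p_notI]; first exact: dirac_splitting.
have pJ : inJ r (belief m lam p1 h) by split; rewrite // ltNge.
exact: feasible_splitting (g_greedy pJ).1.
Qed.
End Greedy.

Section Example.
Variable R : realType.

Definition vec3 (x y z : R) : 'I_3 -> R := fun w => nth 0 [:: x; y; z] w.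
Arguments vec3 x y z w /.
Definition w0 : 'I_3 := @Ordinal 3 0 isT.
Definition w1 : 'I_3 := @Ordinal 3 1 isT.
Definition w2 : 'I_3 := @Ordinal 3 2 isT.

Lemma ord3P (P : 'I_3 -> Prop) : P w0 -> P w1 -> P w2 -> forall w, P w.
Proof.
by move=> P0 P1 P2 [[|[|[|//]]] lt_k3]; rewrite (bool_irrelevance lt_k3 isT).
Qed.

Lemma sum3 (F : 'I_3 -> R) : \sum_w F w = F w0 + F w1 + F w2.
Proof.
rewrite !big_ord_recl big_ord0 addr0 addrA.
by congr (_ + _ + _); congr F; apply: val_inj.
Qed.

Lemma dist3 (q : 'I_3 -> R) :
  is_dist q <-> [/\ 0 <= q w0, 0 <= q w1, 0 <= q w2 & q w0 + q w1 + q w2 = 1].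
Proof.
rewrite /is_dist sum3; split=> [[q_ge0 ->] | [q0 q1 q2 ->]]; first by split.
by split=> //; apply: ord3P.
Qed.

Lemma inner3 (p v : 'I_3 -> R) :
  inner p v = p w0 * v w0 + p w1 * v w1 + p w2 * v w2.
Proof. exact: sum3. Qed.

Definition r_ex : 'I_3 -> R := vec3 100 (-1) (-100).
Definition m_ex : 'I_3 -> R := vec3 (1/1000) (99/100) (9/1000).
Definition lam_ex : R := 1/5.
Definition delta_ex : R := 1/2.
Definition p1_ex : 'I_3 -> R := vec3 (1/25) 0 (24/25).

Lemma inner_r_ex q : inner q r_ex = 100 * q w0 - q w1 - 100 * q w2.
Proof. by rewrite inner3 /r_ex /=; lra. Qed.

Lemma m_ex_gt0 w : 0 < m_ex w.
Proof. by move: w; apply: ord3P; rewrite /m_ex /=; lra. Qed.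

Lemma m_ex_dist : is_dist m_ex.
Proof. by rewrite dist3 /m_ex /=; split; lra. Qed.

Lemma p1_ex_dist : is_dist p1_ex.
Proof. by rewrite dist3 /p1_ex /=; split; lra. Qed.

Lemma lam_ex_ge0 : 0 <= lam_ex. Proof. by rewrite /lam_ex; lra. Qed.
Lemma lam_ex_le1 : lam_ex <= 1. Proof. by rewrite /lam_ex; lra. Qed.

Lemma phi_ex_dist q : is_dist q -> is_dist (phi m_ex lam_ex q).
Proof. exact: (phi_dist m_ex_dist lam_ex_ge0 lam_ex_le1). Qed.

Lemma phi_ex_w0 q : is_dist q -> phi m_ex lam_ex q w0 = 1/1250 + q w0 / 5.
Proof. by case=> _ q_sum; rewrite phiE //= /lam_ex /m_ex /=; lra. Qed.

Lemma ind_r_ex_le q : is_dist q -> ind r_ex q <= 101 * q w0.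
Proof.
rewrite dist3 /ind inner_r_ex => -[q0 q1 q2 q_sum].
by case: ifP => ?; lra.
Qed.

Definition v_ex : 'I_3 -> R := vec3 (101/2250 * 1251) (101/2250) (101/2250).

Lemma inner_v_ex q : is_dist q -> inner q v_ex = 101/2250 * (1 + 1250 * q w0).
Proof. by rewrite dist3 inner3 /v_ex /= => -[_ _ _ q_sum]; lra. Qed.

Lemma v_ex_excessive : excessive m_ex lam_ex r_ex delta_ex v_ex.
Proof.
move=> q q_dist; have phi_q_dist := phi_ex_dist q_dist.
rewrite !inner_v_ex // phi_ex_w0 // /delta_ex.
by have := ind_r_ex_le q_dist; lra.
Qed.

(* The affine maps 1 + <., r>/100 and 101 q(0), both above 1_I on the simplex. *)
Definition majorant_r : 'I_3 -> R := vec3 2 (99/100) 0.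
Definition majorant_w0 : 'I_3 -> R := vec3 101 0 0.

Lemma inner_majorant_r p : inner p majorant_r = 2 * p w0 + 99/100 * p w1.
Proof. by rewrite inner3 /majorant_r /=; lra. Qed.

Lemma inner_majorant_w0 p : inner p majorant_w0 = 101 * p w0.
Proof. by rewrite inner3 /majorant_w0 /=; lra. Qed.

Lemma feasible_ex_weight_le p b qI qJ : feasible r_ex p b qI qJ ->
  b <= 2 * p w0 + 99/100 * p w1 /\ b <= 101 * p w0.
Proof.
rewrite -inner_majorant_r -inner_majorant_w0 => feas.
split; apply: feasible_weight_le feas => q; rewrite ?inner_majorant_r ?inner_majorant_w0.
- by rewrite dist3 => -[]; lra.
- by rewrite /inI dist3 inner_r_ex => -[[]]; lra.
- by rewrite dist3 => -[]; lra.
- by rewrite /inI dist3 inner_r_ex => -[[]]; lra.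
Qed.

(* The binding majorant depends on the sign of p(1) - 100 p(0). *)
Definition greedy_ex (p : 'I_3 -> R) : R * ('I_3 -> R) * ('I_3 -> R) :=
  if 100 * p w0 <= p w1 then
    let a := 101 * p w0 in
    (a, vec3 (1/101) (100/101) 0,
     vec3 0 ((p w1 - 100 * p w0) / (1 - a)) (p w2 / (1 - a)))
  else
    let a := 2 * p w0 + 99/100 * p w1 in
    (a, vec3 (p w0 / a) (p w1 / a) ((p w0 - p w1 / 100) / a), vec3 0 0 1).

Lemma greedy_ex_sel : greedy_sel r_ex greedy_ex.
Proof.
move=> p [p_dist p_J]; move: p_dist p_J.
rewrite dist3 inner_r_ex => -[p0 p1 p2 p_sum] p_J.
rewrite /greedy_split /greedy_ex; case: ifPn => [le_p1|/negP lt_p1] /=.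
- set a := 101 * p w0.
  have a1_gt0 : 0 < 1 - a by rewrite /a; lra.
  have div_a1 x : (1 - a) * (x / (1 - a)) = x.
    by rewrite mulrCA divff ?mulr1 ?lt0r_neq0.
  have qI_I : inI r_ex (vec3 (1/101) (100/101) 0).
    by rewrite /inI dist3 inner_r_ex /=; split; [split|]; lra.
  have qJ_dist : is_dist (vec3 0 ((p w1 - 100 * p w0) / (1 - a)) (p w2 / (1 - a))).
    rewrite dist3 /=; split; rewrite ?divr_ge0 //; try lra.
    by rewrite add0r -mulrDl (_ : _ + _ = 1 - a) ?divff ?lt0r_neq0 // /a; lra.
  split=> [|b qI qJ /feasible_ex_weight_le[] //].
  do 4?split => //; try by rewrite /a; lra.
  by apply: ord3P; rewrite /= ?div_a1 /a; lra.
- set a := 2 * p w0 + 99/100 * p w1.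
  have a_gt0 : 0 < a by rewrite /a; lra.
  have div_a x : a * (x / a) = x by rewrite mulrCA divff ?mulr1 ?lt0r_neq0.
  have qI_I : inI r_ex (vec3 (p w0 / a) (p w1 / a) ((p w0 - p w1 / 100) / a)).
    rewrite /inI dist3 inner_r_ex /=; split; [split|]; rewrite ?divr_ge0 //; try lra.
      by rewrite -!mulrDl (_ : _ + _ = a) ?divff ?lt0r_neq0 // /a; lra.
  have qJ_dist : is_dist (vec3 0 0 1) by rewrite dist3 /=; split; lra.
  split=> [|b qI qJ /feasible_ex_weight_le[] //].
  do 4?split => //; try by rewrite /a; lra.
  by apply: ord3P; rewrite /= ?div_a /a; lra.
Qed.

Lemma greedy_split_p1_ex t : greedy_split r_ex p1_ex t -> t.1.1 = 2/25 /\ t.2 w0 = 0.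
Proof.
case: t => -[a qI] qJ [feas a_max] /=.
have witness : feasible r_ex p1_ex (2/25) (vec3 (1/2) 0 (1/2)) (vec3 0 0 1).
  rewrite /feasible /inI !dist3 inner_r_ex /=.
  split; [lra | split; [lra | split; [split; [split|] | split; [split|]]]]; try lra.
  by apply: ord3P; rewrite /p1_ex /=; lra.
have := a_max _ _ _ witness; have [le_a _] := feasible_ex_weight_le feas.
move: feas le_a; rewrite /feasible /inI !dist3 inner_r_ex /p1_ex /=.
move=> [_ [_ [[[qI0 qI1 qI2 qI_sum] qI_I] [[qJ0 qJ1 qJ2 qJ_sum] p_eq]]]] le_a ge_a.
have a_eq : a = 2/25 by lra.
split=> //; move: (p_eq w0) (p_eq w1); rewrite a_eq /=; lra.
Qed.

Lemma delta_ex_ge0 : 0 <= delta_ex. Proof. by rewrite /delta_ex; lra. Qed.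
Lemma delta_ex_le1 : delta_ex <= 1. Proof. by rewrite /delta_ex; lra. Qed.

Lemma v_ex_ge0 w : 0 <= v_ex w.
Proof. by move: w; apply: ord3P; rewrite /v_ex /=; lra. Qed.

Lemma trunc_payoff_ex_le1 sigma N h :
  admissible m_ex lam_ex p1_ex sigma -> reachable sigma h ->
  trunc_payoff r_ex delta_ex sigma N h <= 1.
Proof.
exact: (trunc_payoff_le1 r_ex m_ex_dist lam_ex_ge0 lam_ex_le1 delta_ex_ge0 N
  delta_ex_le1 p1_ex_dist).
Qed.

Lemma trunc_payoff_ex_singleton_le sigma q N :
  admissible m_ex lam_ex p1_ex sigma -> reachable sigma [:: q] -> is_dist q ->
  trunc_payoff r_ex delta_ex sigma N [:: q] <= 101/2250 * (2 + 250 * q w0).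
Proof.
move=> adm reach_q q_dist; have phi_q_dist := phi_ex_dist q_dist.
have := trunc_payoff_le_excessive m_ex_dist lam_ex_ge0 lam_ex_le1 delta_ex_ge0 N
  p1_ex_dist adm v_ex_ge0 v_ex_excessive reach_q.
by rewrite /= inner_v_ex // phi_ex_w0 //; lra.
Qed.

Lemma greedy_ex_payoff g : greedy_sel r_ex g ->
  payoff r_ex delta_ex (greedy_strategy m_ex lam_ex p1_ex r_ex g)
    <= 2/25 + 23/25 * (1/2 * (101/1125)).
Proof.
move=> g_greedy; set sigma := greedy_strategy m_ex lam_ex p1_ex r_ex g.
have adm : admissible m_ex lam_ex p1_ex sigma.
  exact: greedy_admissible m_ex_dist lam_ex_ge0 lam_ex_le1 p1_ex_dist g_greedy.
have p1_notI : (0 <= inner p1_ex r_ex) = false.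
  by apply/negbTE; rewrite -ltNge inner_r_ex /p1_ex /=; lra.
have p1_J : inJ r_ex p1_ex by split; [exact: p1_ex_dist | rewrite ltNge p1_notI].
have [[_ [_ [[qI_dist _] [qJ_dist _]]]] _] := g_greedy _ p1_J.
have [a_eq qJ0] := greedy_split_p1_ex (g_greedy _ p1_J).
have sigma_nil :
    sigma [::] = [:: (2/25, (g p1_ex).1.2); (1 - 2/25, (g p1_ex).2)].
  by rewrite /sigma /greedy_strategy /= p1_notI a_eq.
move: (g p1_ex).1.2 (g p1_ex).2 sigma_nil qJ0 qI_dist qJ_dist.
move=> qI qJ sigma_nil qJ0 qI_dist qJ_dist.
have reach_qI : reachable sigma [:: qI].
  by apply: (reachable_singleton (a := 2/25)); rewrite ?sigma_nil /=; [lra | left].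
have reach_qJ : reachable sigma [:: qJ].
  apply: (reachable_singleton (a := 1 - 2/25)); rewrite ?sigma_nil /=; first lra.
  by right; left.
have ind_qI : ind r_ex qI <= 1 by rewrite /ind; case: ifP => _; lra.
have ind_qJ : ind r_ex qJ = 0.
  move: qJ_dist; rewrite dist3 /ind inner_r_ex qJ0 => -[_ qJ1 qJ2 qJ_sum].
  by case: ifP => // ?; lra.
apply: payoff_le => -[|N] /=; first lra.
rewrite sigma_nil !big_cons big_nil /= ind_qJ /delta_ex.
have := trunc_payoff_ex_le1 N adm reach_qI.
have := trunc_payoff_ex_singleton_le N adm reach_qJ qJ_dist.
by rewrite qJ0; lra.
Qed.

Definition qI_tau : 'I_3 -> R := vec3 (1/100) (99/100) 0.
Definition qJ_tau : 'I_3 -> R := vec3 (1/250) 0 (249/250).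

Definition tau_ex : strategy R 'I_3 := fun h =>
  match h with
  | [::] => [:: (1, p1_ex)]
  | [:: _] => [:: (4/5, qI_tau); (1 - 4/5, qJ_tau)]
  | _ => [:: (1, belief m_ex lam_ex p1_ex h)]
  end.

Lemma phi_p1_ex w : phi m_ex lam_ex p1_ex w = vec3 (11/1250) (99/125) (249/1250) w.
Proof.
have [_ p1_sum] := p1_ex_dist.
by move: w; apply: ord3P; rewrite phiE // /lam_ex /m_ex /p1_ex /=; lra.
Qed.

Lemma tau_ex_admissible : admissible m_ex lam_ex p1_ex tau_ex.
Proof.
apply: (admissible_of_splits m_ex_dist lam_ex_ge0 lam_ex_le1 p1_ex_dist).
move=> -[|q [|q' h]] reach_h h_dist; first exact: dirac_splitting p1_ex_dist.
  have [_ [a [_ [[= _ <-]|[]]]]] := (reachable_rcons tau_ex [::] q).1 reach_h.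
  apply: (feasible_splitting (r := r_ex)).
  rewrite /feasible /inI !dist3 inner_r_ex /qI_tau /qJ_tau /=.
  split; [lra | split; [lra | split; [split; [split|] | split; [split|]]]]; try lra.
  by apply: ord3P; rewrite phi_p1_ex /=; lra.
exact: dirac_splitting h_dist.
Qed.

Lemma tau_ex_payoff : 1/5 <= payoff r_ex delta_ex tau_ex.
Proof.
have le1 N : trunc_payoff r_ex delta_ex tau_ex N [::] <= 1.
  by apply: trunc_payoff_ex_le1 tau_ex_admissible _.
apply: le_trans (trunc_payoff_le_payoff 2 le1).
rewrite /= !big_cons !big_nil /= /ind !inner_r_ex /p1_ex /qI_tau /qJ_tau /delta_ex /=.
by do ![case: ifP => ?]; lra.
Qed.
End Example.

Theorem proposition1 (R : realType) :
  exists (Omega : finType) (m : Omega -> R) (lam : R) (r : Omega -> R)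
         (delta : R) (p1 : Omega -> R),
    #|Omega| = 3%N /\
    is_dist m /\ 0 <= lam < 1 /\ irreducible m lam /\
    0 < delta < 1 /\ is_dist p1 /\
    (exists g, greedy_sel r g) /\
    (forall g, greedy_sel r g ->
       exists tau, admissible m lam p1 tau /\
         payoff r delta (greedy_strategy m lam p1 r g) < payoff r delta tau).
Proof.
exists 'I_3, (m_ex R), (lam_ex R), (r_ex R), (delta_ex R), (p1_ex R).
split; first exact: card_ord.
split; first exact: m_ex_dist.
have lam_ex_bounds : 0 <= lam_ex R < 1 by rewrite /lam_ex; apply/andP; split; lra.
split=> //; split.
  exact: irreducible_of_gt0 (@m_ex_gt0 R) lam_ex_bounds.
split; first by rewrite /delta_ex; apply/andP; split; lra.
split; first exact: p1_ex_dist.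
split; first by exists (@greedy_ex R); exact: greedy_ex_sel.
move=> g g_greedy; exists (@tau_ex R); split; first exact: tau_ex_admissible.
apply: le_lt_trans (greedy_ex_payoff g_greedy) _.
by apply: lt_le_trans (tau_ex_payoff R); lra.
Qed.
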